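(* Let $A$ be an MV-algebra and $d$ a $(\odot,\vee)$-derivation on $A$ with $d(1)\in\mathbf{B}(A)$. The following are equivalent: (1) $d$ is isotone (i.e. $x\le y$ implies $d(x)\le d(y)$); (2) $d(x)\le d(1)$ for all $x\in A$; (3) $d(x)=d(1)\odot x$ for all $x\in A$; (4) $d(x\wedge y)=d(x)\wedge d(y)$ for all $x,y\in A$; (5) $d(x\vee y)=d(x)\vee d(y)$ for all $x,y\in A$.
   Context: An MV-algebra is an algebra $(A,\oplus,{}^*,0)$ of type $(2,1,0)$ satisfying: $x\oplus(y\oplus z)=(x\oplus y)\oplus z$, $x\oplus y=y\oplus x$, $x\oplus 0=x$, $x^{**}=x$, $x\oplus 0^*=0^*$, $(x^*\oplus y)^*\oplus y=(y^*\oplus x)^*\oplus x$. Put $1=0^*$ and $x\odot y=(x^*\oplus y^* )^*$. The natural order is $x\le y$ iff $x^*\oplus y=1$, with lattice operations $x\vee y=(x\odot y^* )\oplus y$, $x\wedge y=x\odot(x^*\oplus y)$. The Boolean center is $\mathbf{B}(A)=\{x\in A: x\oplus x=x\}$. A $(\odot,\vee)$-derivation on $A$ is a map $d:A\to A$ with $d(x\odot y)=(d(x)\odot y)\vee(x\odot d(y))$ for all $x,y\in A$. *)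

Record MVAlgebra := {
  carrier :> Type;
  oplus : carrier -> carrier -> carrier;
  neg : carrier -> carrier;
  zero : carrier;
  oplus_assoc : forall x y z, oplus x (oplus y z) = oplus (oplus x y) z;
  oplus_comm : forall x y, oplus x y = oplus y x;
  oplus_zero : forall x, oplus x zero = x;
  neg_neg : forall x, neg (neg x) = x;
  oplus_one : forall x, oplus x (neg zero) = neg zero;
  mv_luk : forall x y, oplus (neg (oplus (neg x) y)) y = oplus (neg (oplus (neg y) x)) x
}.

Section MVOps.
Variable A : MVAlgebra.
Definition one : A := neg A (zero A).
Definition odot (x y : A) : A := neg A (oplus A (neg A x) (neg A y)).
Definition mvle (x y : A) : Prop := oplus A (neg A x) y = one.
Definition mvjoin (x y : A) : A := oplus A (odot x (neg A y)) y.
Definition mvmeet (x y : A) : A := odot x (oplus A (neg A x) y).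
Definition boolean (x : A) : Prop := oplus A x x = x.
Definition is_odot_join_derivation (d : A -> A) : Prop :=
  forall x y, d (odot x y) = mvjoin (odot (d x) y) (odot x (d y)).
End MVOps.

From Stdlib Require Import Setoid.

Section MVOrder.
Variable A : MVAlgebra.
Local Notation pl := (oplus A).
Local Notation ng := (neg A).
Local Notation z0 := (zero A).
Local Notation o1 := (one A).
Local Notation od := (odot A).
Local Notation le := (mvle A).
Local Notation jn := (mvjoin A).
Local Notation mt := (mvmeet A).

Lemma neg_one : ng o1 = z0.
Proof. unfold one. apply neg_neg. Qed.

Lemma zero_pl x : pl z0 x = x.
Proof. rewrite oplus_comm. apply oplus_zero. Qed.

Lemma one_pl x : pl o1 x = o1.
Proof. rewrite oplus_comm. apply oplus_one. Qed.

(* ¬x ⊕ x = 1, obtained from the Łukasiewicz axiom with y = 1. *)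
Lemma negx_pl x : pl (ng x) x = o1.
Proof.
  pose proof (mv_luk A x o1) as H. unfold one in H.
  rewrite oplus_one, !neg_neg, zero_pl in H. fold (one A) in H.
  symmetry; exact H.
Qed.

Lemma neg_inj x y : ng x = ng y -> x = y.
Proof. intro H. rewrite <- (neg_neg A x), <- (neg_neg A y), H. reflexivity. Qed.

Lemma od_comm x y : od x y = od y x.
Proof. unfold odot. rewrite oplus_comm. reflexivity. Qed.

Lemma od_assoc x y z : od x (od y z) = od (od x y) z.
Proof. unfold odot. rewrite !neg_neg, oplus_assoc. reflexivity. Qed.

Lemma od_one x : od x o1 = x.
Proof. unfold odot. rewrite neg_one, oplus_zero, neg_neg. reflexivity. Qed.

Lemma od_zero x : od x z0 = z0.
Proof. unfold odot. fold (one A). rewrite oplus_one. apply neg_one. Qed.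

Lemma neg_pl x y : ng (pl x y) = od (ng x) (ng y).
Proof. unfold odot. rewrite !neg_neg. reflexivity. Qed.

Lemma neg_od x y : ng (od x y) = pl (ng x) (ng y).
Proof. unfold odot. rewrite neg_neg. reflexivity. Qed.

(* The join is commutative: this is the Łukasiewicz axiom itself. *)
Lemma join_comm x y : jn x y = jn y x.
Proof. unfold mvjoin, odot. rewrite !neg_neg. apply mv_luk. Qed.

Lemma le_refl x : le x x.
Proof. apply negx_pl. Qed.

Lemma le_one x : le x o1.
Proof. apply oplus_one. Qed.

Lemma zero_le x : le z0 x.
Proof. unfold mvle. fold (one A). apply one_pl. Qed.

Lemma le_pl x w : le x (pl x w).
Proof. unfold mvle. rewrite oplus_assoc, negx_pl. apply one_pl. Qed.

Lemma le_join_eq x y : le x y -> jn x y = y.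
Proof.
  unfold mvle, mvjoin, odot. intro H. rewrite neg_neg, H, neg_one. apply zero_pl.
Qed.

Lemma le_meet_eq x y : le x y -> mt x y = x.
Proof. intro H. unfold mvmeet. rewrite H. apply od_one. Qed.

Lemma le_antisym x y : le x y -> le y x -> x = y.
Proof.
  intros H1 H2. rewrite <- (le_join_eq _ _ H1), join_comm.
  symmetry. apply le_join_eq; auto.
Qed.

Lemma le_decomp x y : le x y -> y = pl x (od y (ng x)).
Proof.
  intro H. rewrite <- (le_join_eq _ _ H) at 1. rewrite join_comm. unfold mvjoin.
  apply oplus_comm.
Qed.

Lemma le_trans x y z : le x y -> le y z -> le x z.
Proof.
  intros H1 H2. rewrite (le_decomp _ _ H2), (le_decomp _ _ H1).
  rewrite <- oplus_assoc. apply le_pl.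
Qed.

Lemma le_pl_mono x y a : le x y -> le (pl x a) (pl y a).
Proof.
  intro H. rewrite (le_decomp _ _ H).
  rewrite <- oplus_assoc, (oplus_comm A (od _ _) a), oplus_assoc. apply le_pl.
Qed.

Lemma le_neg x y : le x y -> le (ng y) (ng x).
Proof. unfold mvle. rewrite neg_neg, oplus_comm. auto. Qed.

Lemma le_neg_rev x y : le (ng y) (ng x) -> le x y.
Proof. intro H. apply le_neg in H. rewrite !neg_neg in H. exact H. Qed.

Lemma le_od_mono x y a : le x y -> le (od a x) (od a y).
Proof.
  intro H. unfold odot. apply le_neg.
  rewrite (oplus_comm A (ng a)), (oplus_comm A (ng a)). apply le_pl_mono, le_neg, H.
Qed.

Lemma od_le_l a x : le (od a x) a.
Proof. rewrite <- (od_one a) at 2. apply le_od_mono, le_one. Qed.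

Lemma od_le_r a x : le (od a x) x.
Proof. rewrite od_comm. apply od_le_l. Qed.

Lemma join_le_l x y : le x (jn x y).
Proof. rewrite join_comm. unfold mvjoin. rewrite (oplus_comm A _ x). apply le_pl. Qed.

Lemma join_le_r x y : le y (jn x y).
Proof. unfold mvjoin. rewrite (oplus_comm A _ y). apply le_pl. Qed.

Lemma join_lub u v z : le u z -> le v z -> le (jn u v) z.
Proof.
  intros Hu Hv.
  assert (E : jn z v = z) by (rewrite join_comm; apply le_join_eq; auto).
  apply le_trans with (jn z v); [| rewrite E; apply le_refl].
  unfold mvjoin. apply le_pl_mono. rewrite (od_comm u), (od_comm z).
  apply le_od_mono; auto.
Qed.

Lemma meet_dual x y : mt x y = ng (jn (ng x) (ng y)).
Proof.
  rewrite join_comm. unfold mvmeet, mvjoin.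
  rewrite neg_pl, neg_od, !neg_neg, od_comm. f_equal. apply oplus_comm.
Qed.

Lemma meet_comm x y : mt x y = mt y x.
Proof. rewrite !meet_dual, join_comm. reflexivity. Qed.

Lemma meet_le_l x y : le (mt x y) x.
Proof. rewrite meet_dual. apply le_neg_rev. rewrite neg_neg. apply join_le_l. Qed.

Lemma meet_le_r x y : le (mt x y) y.
Proof. rewrite meet_comm. apply meet_le_l. Qed.

Lemma meet_glb z u v : le z u -> le z v -> le z (mt u v).
Proof.
  intros H1 H2. rewrite meet_dual. apply le_neg_rev. rewrite neg_neg.
  apply join_lub; apply le_neg; auto.
Qed.

Lemma od_residuation a u w : le (od a u) w -> le u (pl (ng a) w).
Proof.
  intro Hu. apply le_trans with (pl (od a u) (ng a)).
  - pose proof (join_le_l u (ng a)) as J. unfold mvjoin in J.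
    rewrite neg_neg, od_comm in J. exact J.
  - rewrite (oplus_comm A (ng a)). apply le_pl_mono; auto.
Qed.

Lemma od_join_distr a x y : od a (jn x y) = jn (od a x) (od a y).
Proof.
  apply le_antisym.
  - set (w := jn (od a x) (od a y)).
    apply le_trans with (od a (pl (ng a) w)).
    + apply le_od_mono, join_lub; apply od_residuation;
        [apply join_le_l | apply join_le_r].
    + change (le (mt a w) w). apply meet_le_r.
  - apply join_lub; apply le_od_mono; [apply join_le_l | apply join_le_r].
Qed.

Lemma bool_idem a : boolean A a -> od a a = a.
Proof.
  intro Hb. apply le_antisym; [apply od_le_l |].
  assert (E : jn a (ng a) = o1).
  { rewrite join_comm. unfold mvjoin.
    rewrite <- neg_pl. unfold boolean in Hb. rewrite Hb. apply negx_pl. }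
  unfold mvjoin in E. rewrite neg_neg in E. unfold mvle. rewrite oplus_comm. exact E.
Qed.

Lemma bool_absorb a z : boolean A a -> le z a -> od a z = z.
Proof.
  intros Hb H.
  assert (Hz : z = od a (pl (ng a) z)).
  { rewrite <- (le_meet_eq _ _ H) at 1. rewrite meet_comm. reflexivity. }
  rewrite Hz at 1. rewrite od_assoc, (bool_idem _ Hb). symmetry; exact Hz.
Qed.

Lemma od_bool_meet_distr a x y :
  boolean A a -> od a (mt x y) = mt (od a x) (od a y).
Proof.
  intro Hb. apply le_antisym.
  - apply meet_glb; apply le_od_mono; [apply meet_le_l | apply meet_le_r].
  - set (w := mt (od a x) (od a y)).
    assert (Hw : le w a) by (apply le_trans with (od a x); [apply meet_le_l | apply od_le_l]).
    rewrite <- (bool_absorb a w Hb Hw). apply le_od_mono, meet_glb.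
    + apply le_trans with (od a x); [apply meet_le_l | apply od_le_r].
    + apply le_trans with (od a y); [apply meet_le_r | apply od_le_r].
Qed.

End MVOrder.

Section Derivation.
Variable A : MVAlgebra.
Variable d : A -> A.
Hypothesis hd : is_odot_join_derivation A d.

(* d 0 = 0, from the derivation rule at (0, 0). *)
Lemma derivation_zero : d (zero A) = zero A.
Proof.
  pose proof (hd (zero A) (zero A)) as H.
  rewrite !od_zero, (od_comm A (zero A)), od_zero in H.
  rewrite H. unfold mvjoin. rewrite oplus_zero, od_comm, od_zero. reflexivity.
Qed.

(* A derivation is decreasing: apply the rule at (x, ¬x), where x ⊙ ¬x = 0. *)
Lemma derivation_le x : mvle A (d x) x.
Proof.
  pose proof (hd x (neg A x)) as H.
  assert (E : odot A x (neg A x) = zero A).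
  { unfold odot. rewrite neg_neg, negx_pl. apply neg_one. }
  rewrite E, derivation_zero in H.
  assert (E2 : odot A (d x) (neg A x) = zero A).
  { apply le_antisym; [| apply zero_le]. rewrite H. apply join_le_l. }
  unfold odot in E2. rewrite neg_neg in E2. unfold mvle.
  apply neg_inj. rewrite E2, neg_one. reflexivity.
Qed.

(* x ⊙ d 1 ≤ d x, from the derivation rule at (x, 1). *)
Lemma derivation_lower x : mvle A (odot A x (d (one A))) (d x).
Proof.
  pose proof (hd x (one A)) as H. rewrite !od_one in H.
  rewrite H. apply join_le_r.
Qed.

Lemma isotone_bounded :
  (forall x y, mvle A x y -> mvle A (d x) (d y)) ->
  forall x, mvle A (d x) (d (one A)).
Proof. intros H x. apply H, le_one. Qed.

(* (2) ⇒ (3): d x ≤ d 1 and d 1 is Boolean give d x = d 1 ⊙ d x ≤ d 1 ⊙ x. *)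
Lemma bounded_multiplicative :
  boolean A (d (one A)) ->
  (forall x, mvle A (d x) (d (one A))) ->
  forall x, d x = odot A (d (one A)) x.
Proof.
  intros Hb H x. apply le_antisym.
  - rewrite <- (bool_absorb A _ (d x) Hb (H x)). apply le_od_mono, derivation_le.
  - rewrite od_comm. apply derivation_lower.
Qed.

Lemma multiplicative_isotone :
  (forall x, d x = odot A (d (one A)) x) ->
  forall x y, mvle A x y -> mvle A (d x) (d y).
Proof. intros H x y Hxy. rewrite (H x), (H y). apply le_od_mono; auto. Qed.

Lemma multiplicative_meet :
  boolean A (d (one A)) ->
  (forall x, d x = odot A (d (one A)) x) ->
  forall x y, d (mvmeet A x y) = mvmeet A (d x) (d y).
Proof.
  intros Hb H x y. rewrite (H x), (H y), (H (mvmeet A x y)).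
  apply od_bool_meet_distr, Hb.
Qed.

Lemma multiplicative_join :
  (forall x, d x = odot A (d (one A)) x) ->
  forall x y, d (mvjoin A x y) = mvjoin A (d x) (d y).
Proof.
  intros H x y. rewrite (H x), (H y), (H (mvjoin A x y)). apply od_join_distr.
Qed.

Lemma meet_preserving_isotone :
  (forall x y, d (mvmeet A x y) = mvmeet A (d x) (d y)) ->
  forall x y, mvle A x y -> mvle A (d x) (d y).
Proof.
  intros H x y Hxy. rewrite <- (le_meet_eq A _ _ Hxy), H. apply meet_le_r.
Qed.

Lemma join_preserving_isotone :
  (forall x y, d (mvjoin A x y) = mvjoin A (d x) (d y)) ->
  forall x y, mvle A x y -> mvle A (d x) (d y).
Proof.
  intros H x y Hxy. rewrite <- (le_join_eq A _ _ Hxy), H. apply join_le_l.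
Qed.

End Derivation.

Theorem proposition3p20 (A : MVAlgebra) (d : A -> A)
  (hd : is_odot_join_derivation A d) (h1 : boolean A (d (one A))) :
  let P1 := forall x y : A, mvle A x y -> mvle A (d x) (d y) in
  let P2 := forall x : A, mvle A (d x) (d (one A)) in
  let P3 := forall x : A, d x = odot A (d (one A)) x in
  let P4 := forall x y : A, d (mvmeet A x y) = mvmeet A (d x) (d y) in
  let P5 := forall x y : A, d (mvjoin A x y) = mvjoin A (d x) (d y) in
  (P1 <-> P2) /\ (P2 <-> P3) /\ (P3 <-> P4) /\ (P4 <-> P5).
Proof.
  intros P1 P2 P3 P4 P5.
  assert (H12 : P1 -> P2) by exact (isotone_bounded A d).
  assert (H23 : P2 -> P3) by exact (bounded_multiplicative A d hd h1).
  assert (H31 : P3 -> P1) by exact (multiplicative_isotone A d).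
  assert (H34 : P3 -> P4) by exact (multiplicative_meet A d h1).
  assert (H35 : P3 -> P5) by exact (multiplicative_join A d).
  assert (H41 : P4 -> P1) by exact (meet_preserving_isotone A d).
  assert (H51 : P5 -> P1) by exact (join_preserving_isotone A d).
  repeat split; tauto.
Qed.
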